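(* For every cube $K=[-q\mathbf 1,q\mathbf 1]$ ($q>0$) and every $\sigma\in\Sigma$, the Lebesgue measure of $S_K(\sigma)$ satisfies $|S_K(\sigma)|\le 2^{d+1}\psi_K(\sigma)$.
   Context: Order conventions: for $x,y\in\mathbb R^d$, $x\le y$ iff $x_i\le y_i$ for all $i$; $\mathbf 1=(1,\dots,1)$; $|x|_\infty=\max_i|x_i|$; $x!=x_1x_2\cdots x_d$; $[a,b]=\{x:a\le x\le b\}$. Fix $d\ge2$. $\mathbb Z^*=\mathbb Z\cup\{\pm\infty\}$. The state space $\Sigma$ is the set of functions $\sigma:\mathbb R^d\to\mathbb Z^*$ such that (i) $x\le y$ implies $\sigma(x)\le\sigma(y)$; (ii) for every cube $[-q\mathbf 1,q\mathbf 1]$ there are finite partitions $-q=s_i^0<\dots<s_i^{m_i}=q$ of each coordinate axis such that $\sigma$ is constant on each rectangle $\prod_i[s_i^{k_i},s_i^{k_i+1})$; (iii) for every $b\in\mathbb R^d$, $\lim_{M\to\infty}\sup\{|y|_\infty^{-d/(d+1)}\sigma(y):y\le b,|y|_\infty\ge M\}=-\infty$. For $\sigma\in\Sigma$ and $x\in\mathbb R^d$: $S_x(\sigma)=\{y: y\le x,\ \sigma(y)=\sigma(x)\}$ if $\sigma(x)$ is finite, and $S_x(\sigma)=\emptyset$ if $\sigma(x)=\pm\infty$; $S_K(\sigma)=\bigcup_{x\in K}S_x(\sigma)$. For $b\in\mathbb R^d$, $h\in\mathbb Z$, $y^{b,h}(\sigma)$ is the maximal point $y\le b$ such that the rectangle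 $[y,b]$ contains $\{x\le b:\sigma(x)\ge h\}$ (and $y^{b,h}(\sigma)=b$ if this set is empty). With $K=[-q\mathbf 1,q\mathbf 1]$ write $y^h=y^{q\mathbf 1,h}(\sigma)$ and $\lambda_k(\sigma)=\sup_{-\infty<h\le k-2}(q\mathbf 1-y^h)!\,(k-h)^{-(d+1)}$ for $k\in\mathbb Z$. $I(K,\sigma)=\min\{\sigma(x):x\in K,\sigma(x)\text{ finite}\}$, $J(K,\sigma)=\max\{\sigma(x):x\in K,\sigma(x)\text{ finite}\}$ (if $\sigma=\pm\infty$ on all of $K$, set $I=\infty=-J$). Finally $\psi_K(\sigma)=\big(\sum_{k=I(K,\sigma)+1}^{J(K,\sigma)+1}\lambda_k^2(\sigma)\big)^{1/2}$ (empty sum $=0$). *)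

From HB Require Import structures.
From mathcomp Require Import all_boot all_order all_algebra.
From mathcomp Require Import all_classical all_reals.
From mathcomp Require Import all_analysis.
Set Implicit Arguments. Unset Strict Implicit. Unset Printing Implicit Defensive.
Import Order.TTheory GRing.Theory Num.Theory numFieldNormedType.Exports.
Local Open Scope classical_set_scope.
Local Open Scope ring_scope.

Section Defs.
Variables (R : realType) (d : nat).

Definition vle (x y : 'I_d -> R) : Prop := forall i, x i <= y i.

Definition supnorm (x : 'I_d -> R) : R := \big[Num.max/0]_(i < d) `|x i|.

Definition vfact (x : 'I_d -> R) : R := \prod_(i < d) x i.

Definition rect (a b : 'I_d -> R) : set ('I_d -> R) := [set x | vle a x /\ vle x b].

Definition cst (q : R) : 'I_d -> R := fun _ => q.

Definition cube (q : R) : set ('I_d -> R) := rect (cst (- q)) (cst q).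

Definition zs2er (z : \bar int) : \bar R := er_map (fun n : int => n%:~R) z.

Definition sigma_monotone (sigma : ('I_d -> R) -> \bar int) : Prop :=
  forall x y, vle x y -> (sigma x <= sigma y)%E.

Definition sigma_piecewise_const (sigma : ('I_d -> R) -> \bar int) : Prop :=
  forall q : R, 0 < q ->
  exists s : 'I_d -> seq R,
    (forall i, [/\ (1 < size (s i))%N, head 0 (s i) = - q,
                   last 0 (s i) = q & sorted <%R (s i)]) /\
    (forall k : 'I_d -> nat, (forall i, (k i).+1 < size (s i))%N ->
       forall x y,
         (forall i, nth 0 (s i) (k i) <= x i < nth 0 (s i) (k i).+1) ->
         (forall i, nth 0 (s i) (k i) <= y i < nth 0 (s i) (k i).+1) ->
         sigma x = sigma y).

Definition sigma_decay (sigma : ('I_d -> R) -> \bar int) : Prop :=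
  forall b : 'I_d -> R,
    (fun M : R => ereal_sup
       [set ((supnorm y `^ (- (d%:R / (d.+1)%:R)))%:E * zs2er (sigma y))%E
       | y in [set y | vle y b /\ M <= supnorm y]]) @ +oo --> -oo%E.

Definition inSigma (sigma : ('I_d -> R) -> \bar int) : Prop :=
  [/\ sigma_monotone sigma, sigma_piecewise_const sigma & sigma_decay sigma].

Definition S_pt (sigma : ('I_d -> R) -> \bar int) (x : 'I_d -> R) : set ('I_d -> R) :=
  match sigma x with
  | EFin _ => [set y | vle y x /\ sigma y = sigma x]
  | _ => set0
  end.

Definition S_set (K : set ('I_d -> R)) (sigma : ('I_d -> R) -> \bar int) : set ('I_d -> R) :=
  \bigcup_(x in K) S_pt sigma x.

(* Defined as the greatest element of the set of admissible y (default b if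
   there is none, which cannot happen for sigma in Sigma). *)
Definition ybh (sigma : ('I_d -> R) -> \bar int) (b : 'I_d -> R) (h : int) : 'I_d -> R :=
  let adm := [set y | vle y b /\
                 [set x | vle x b /\ (h%:E <= sigma x)%E] `<=` rect y b] in
  xget b [set y | adm y /\ forall y', adm y' -> vle y' y].

Definition lambda (q : R) (sigma : ('I_d -> R) -> \bar int) (k : int) : \bar R :=
  ereal_sup [set (vfact (fun i => q - ybh sigma (cst q) h i) * ((k - h)%:~R ^- d.+1))%:E
            | h in [set h : int | h <= k - 2]].

Definition fin_vals (K : set ('I_d -> R)) (sigma : ('I_d -> R) -> \bar int) : set int :=
  [set z : int | exists2 x, K x & sigma x = z%:E].

Definition I_K (K : set ('I_d -> R)) (sigma : ('I_d -> R) -> \bar int) : int :=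
  xget 0 [set z | fin_vals K sigma z /\ forall w, fin_vals K sigma w -> z <= w].
Definition J_K (K : set ('I_d -> R)) (sigma : ('I_d -> R) -> \bar int) : int :=
  xget 0 [set z | fin_vals K sigma z /\ forall w, fin_vals K sigma w -> w <= z].

End Defs.

Definition int_range (a b : int) : seq int :=
  [seq a + (j%:Z) | j <- iota 0 (if (a <= b) then absz (b - a + 1) else 0)].

Definition esqrt (R : realType) (x : \bar R) : \bar R :=
  match x with
  | EFin r => (Num.sqrt r)%:E
  | +oo%E => +oo%E
  | -oo%E => -oo%E
  end.

(* psi_K(sigma) with K = [-q1,q1]; if sigma has no finite value on K then
   I = +oo, J = -oo and the sum is empty (= 0). *)
Definition psi (R : realType) (d : nat) (q : R) (sigma : ('I_d -> R) -> \bar int) : \bar R :=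
  let K := cube q in
  if asbool (fin_vals K sigma = set0) then 0%E
  else esqrt (\sum_(k <- int_range (I_K K sigma + 1) (J_K K sigma + 1))
                (lambda q sigma k * lambda q sigma k)%E)%E.

Definition box_vol (R : realType) (d : nat) (a b : 'I_d -> R) : R :=
  \prod_(i < d) Num.max (b i - a i) 0.

Definition leb_outer (R : realType) (d : nat) (A : set ('I_d -> R)) : \bar R :=
  ereal_inf [set s : \bar R | exists a b : nat -> 'I_d -> R,
     A `<=` \bigcup_n rect (a n) (b n) /\
     s = (\sum_(0 <= n <oo) (box_vol (a n) (b n))%:E)%E].

From HB Require Import structures.
From mathcomp Require Import all_boot all_order all_algebra.
From mathcomp Require Import all_classical all_reals.
From mathcomp Require Import all_analysis.
Set Implicit Arguments. Unset Strict Implicit. Unset Printing Implicit Defensive.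
Import Order.TTheory GRing.Theory Num.Theory numFieldNormedType.Exports.
Local Open Scope classical_set_scope.
Local Open Scope ring_scope.

(* Let I be the least finite value of sigma on K and y = y^{q1, I-1}.  A point
   of S_K(sigma) lies below some x in K and shares its finite value sigma(x) >= I,
   so S_K(sigma) is contained in the rectangle [y, q1], of volume (q1 - y)!.
   That volume is 2^{d+1} times the term h = I - 1 of the supremum defining
   lambda_{I+1}, and lambda_{I+1} is the first summand of psi_K(sigma).
   Condition (ii) makes sigma take finitely many values on K, so that I exists;
   condition (iii) bounds the superlevel sets of sigma from below, so that
   y^{b,h} exists. *)

Lemma sorted_nth_bracket (R : realDomainType) (s : seq R) (t : R) :
  (1 < size s)%N -> head 0 s <= t -> t < last 0 s ->
  exists j, (j.+1 < size s)%N /\ nth 0 s j <= t < nth 0 s j.+1.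
Proof.
elim: s => [//|a s IH] /=.
case: s IH => [//|b s] IH _ ha hl.
have [tb|bt] := ltP t b; first by exists 0%N; rewrite /= ha tb.
case: s IH hl => [|c s] IH hl; first by move: hl; rewrite /= ltNge bt.
have [j [hj1 hj2]] := IH erefl bt hl.
by exists j.+1.
Qed.

Lemma int_bounded_ex_min (S : set int) (z0 B : int) : S z0 ->
  (forall z, S z -> `|z| <= B) -> exists m, S m /\ forall w, S w -> m <= w.
Proof.
move=> Sz0 hB.
have shiftK z : S z -> (absz (z + B))%:Z - B = z.
  move=> /hB; rewrite ler_norml => /andP[hBz _].
  by rewrite gez0_abs ?addrK // -lerBlDr sub0r.
pose P n := `[< S (n%:Z - B) >].
have exP : exists n, P n by exists (absz (z0 + B)); apply/asboolP; rewrite shiftK.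
case: (ex_minnP exP) => m /asboolP Sm hmin.
exists (m%:Z - B); split => // w Sw.
have /hmin : P (absz (w + B)) by apply/asboolP; rewrite shiftK.
by rewrite -lez_nat -(lerD2r (- B)) shiftK.
Qed.

Lemma int_bounded_ex_max (S : set int) (z0 B : int) : S z0 ->
  (forall z, S z -> `|z| <= B) -> exists m, S m /\ forall w, S w -> w <= m.
Proof.
move=> Sz0 hB.
have [|z /hB|m [Sm hm]] := @int_bounded_ex_min (fun z => S (- z)) (- z0) B.
- by rewrite opprK.
- by rewrite normrN.
exists (- m); split => // w Sw.
by rewrite -lerN2 opprK; apply: hm; rewrite opprK.
Qed.

Lemma esqrt_sqrD_ge (R : realType) (l r : \bar R) : (0 <= l)%E -> (0 <= r)%E ->
  (l <= esqrt (l * l + r))%E.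
Proof.
case: l => [x| |] // x0; last first.
  by move=> r0; rewrite mulyy addye // gt_eqF // (lt_le_trans _ r0) // ltNye.
case: r => [t| |] //= t0; last by rewrite leey.
rewrite lee_fin in x0 t0 *.
by rewrite -{1}(ger0_norm x0) -sqrtr_sqr; apply: ler_wsqrtr; rewrite expr2 lerDl.
Qed.

Lemma int_range_cons (a b : int) : a <= b ->
  int_range a b = a :: [seq a + j%:Z | j <- iota 1 (absz (b - a))].
Proof.
move=> ab; rewrite /int_range ab.
have ba : 0 <= b - a by rewrite subr_ge0.
have -> : absz (b - a + 1) = (absz (b - a)).+1.
  apply/eqP; rewrite -eqz_nat -addn1 PoszD (gez0_abs ba) gez0_abs //.
  exact: addr_ge0.
by rewrite /= addr0.
Qed.

Lemma box_vol_ge0 (R : realType) (d : nat) (a b : 'I_d -> R) : 0 <= box_vol a b.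
Proof. by apply: prodr_ge0 => i _; rewrite le_max lexx orbT. Qed.

Lemma box_vol_xx (R : realType) (d : nat) (a : 'I_d -> R) :
  (0 < d)%N -> box_vol a a = 0.
Proof.
by case: d a => [//|d] a _; rewrite /box_vol big_ord_recl subrr maxxx mul0r.
Qed.

Lemma leb_outer_le_box_vol (R : realType) (d : nat) (A : set ('I_d -> R)) a b :
  (0 < d)%N -> A `<=` rect a b -> (leb_outer A <= (box_vol a b)%:E)%E.
Proof.
move=> d0 hA; apply: ereal_inf_lbound.
exists (fun=> a), (fun n => if n == 0%N then b else a).
split; first by move=> x /hA; exists 0%N.
rewrite (@nneseries_split R _ 0 1); last by move=> k _; rewrite lee_fin box_vol_ge0.
rewrite add0n big_nat1 /= eseries0 ?adde0 // => n n0 _.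
by rewrite (negbTE (lt0n_neq0 n0)) box_vol_xx.
Qed.

Lemma leb_outer_set0 (R : realType) (d : nat) :
  (0 < d)%N -> (leb_outer (@set0 ('I_d -> R)) <= 0)%E.
Proof.
move=> d0; have := leb_outer_le_box_vol d0 (sub0set (rect (cst 0 : 'I_d -> R) (cst 0))).
by rewrite box_vol_xx.
Qed.

Section Sigma.
Variables (R : realType) (d : nat) (sigma : ('I_d -> R) -> \bar int).

Lemma fin_vals_cube_bounded (q : R) : 0 < q -> sigma_piecewise_const sigma ->
  exists B : int, forall z, fin_vals (cube q) sigma z -> `|z| <= B.
Proof.
(* The cells are half-open, so partition a larger cube to cover the face x_i = q. *)
move=> q0 hpc; have [s [hs hk]] := hpc (q + 1) (addr_gt0 q0 ltr01).
pose N := (\max_(i < d) size (s i))%N.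
pose corner (jf : {ffun 'I_d -> 'I_N.+1}) : 'I_d -> R := fun i => nth 0 (s i) (jf i).
pose f jf : int := if sigma (corner jf) is EFin v then v else 0.
exists (\sum_jf `|f jf|) => z [x [Kx1 Kx2] sxz].
have /choice[j hj] : forall i, exists j, (j.+1 < size (s i))%N /\
    nth 0 (s i) j <= x i < nth 0 (s i) j.+1.
  move=> i; have [s_size s_head s_last _] := hs i.
  apply: sorted_nth_bracket => //.
    by rewrite s_head (le_trans _ (Kx1 i)) // /cst lerN2 lerDl.
  by rewrite s_last (le_lt_trans (Kx2 i)) // /cst ltrDl.
pose jf := [ffun i => inord (j i) : 'I_N.+1].
have jfE i : nat_of_ord (jf i) = j i.
  rewrite ffunE inordK // (leq_trans _ (leqnSn _)) //.
  by rewrite (leq_trans _ (leq_bigmax i)) // ltnW //; case: (hj i).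
have corner_z : sigma (corner jf) = z%:E.
  rewrite -sxz; apply: (hk j (fun i => (hj i).1)) => i; last exact: (hj i).2.
  by rewrite /corner jfE lexx; case/andP: (hj i).2 => a b; exact: le_lt_trans a b.
have <- : f jf = z by rewrite /f corner_z.
by rewrite (bigD1 jf) //= lerDl sumr_ge0.
Qed.

Lemma I_K_spec (q : R) : 0 < q -> sigma_piecewise_const sigma ->
  fin_vals (cube q) sigma !=set0 ->
  fin_vals (cube q) sigma (I_K (cube q) sigma) /\
  forall w, fin_vals (cube q) sigma w -> I_K (cube q) sigma <= w.
Proof.
move=> q0 hpc [z0 hz0]; have [B hB] := fin_vals_cube_bounded q0 hpc.
exact: (xgetPex 0 (int_bounded_ex_min hz0 hB)).
Qed.

Lemma J_K_spec (q : R) : 0 < q -> sigma_piecewise_const sigma ->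
  fin_vals (cube q) sigma !=set0 ->
  fin_vals (cube q) sigma (J_K (cube q) sigma) /\
  forall w, fin_vals (cube q) sigma w -> w <= J_K (cube q) sigma.
Proof.
move=> q0 hpc [z0 hz0]; have [B hB] := fin_vals_cube_bounded q0 hpc.
exact: (xgetPex 0 (int_bounded_ex_max hz0 hB)).
Qed.

Lemma superlevel_supnorm_bounded : sigma_decay sigma ->
  forall b (h : int), exists M : R,
  forall y, vle y b -> (h%:E <= sigma y)%E -> supnorm y < M.
Proof.
move=> hdec b h.
have /cvgeNyPle /(_ (- (`|h|%:~R + 1))) [M0 [_ hM0]] := hdec b.
exists (Num.max (M0 + 1) 1) => y yb hy; rewrite ltNge; apply/negP => hM.
have /hM0 hsup : M0 < Num.max (M0 + 1) 1 by rewrite lt_max ltrDl ltr01.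
set c := supnorm y `^ (- (d%:R / (d.+1)%:R)).
have he : (c%:E * zs2er R (sigma y) <= (- (`|h|%:~R + 1))%:E)%E.
  by apply: le_trans hsup; apply: ereal_sup_ubound; exists y.
have s1 : 1 <= supnorm y by apply: le_trans hM; rewrite le_max lexx orbT.
have c0 : 0 < c by apply: powR_gt0; apply: lt_le_trans s1.
have c1 : c <= 1.
  by rewrite -(powRr0 (supnorm y)) ler_powR // oppr_le0 divr_ge0.
move: he hy; rewrite /zs2er; case: (sigma y) => [v| |] //=; last first.
  by rewrite gt0_muley ?lte_fin.
rewrite !lee_fin => he hv.
have hv_gt : - (`|h|%:~R + 1) < (v%:~R : R).
  apply: (@lt_le_trans _ _ h%:~R); last by rewrite ler_int.
  by rewrite ltrNl (@le_lt_trans _ _ `|h|%:~R) ?ltrDl // -intrN ler_int -normrN ler_norm.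
suff : - (`|h|%:~R + 1) < c * v%:~R by rewrite ltNge he.
have [v0|v0] := leP 0 (v%:~R : R).
  by rewrite (lt_le_trans _ (mulr_ge0 (ltW c0) v0)) // oppr_lt0 ltr_wpDl.
by rewrite (lt_le_trans hv_gt) // ler_niMl // ltW.
Qed.

Lemma ybh_le b h : vle (ybh sigma b h) b.
Proof.
rewrite /ybh; set P := (X in xget _ X).
have [[y Py]|nex] := pselect (exists y, P y).
  by have [[]] := xgetPex b (ex_intro _ y Py).
by rewrite xgetPN // => y Py; apply: nex; exists y.
Qed.

(* The candidate for y^{b,h} is the coordinatewise infimum of the superlevel set
   below b, which exists because that set is bounded below. *)
Lemma ybh_spec : sigma_decay sigma -> forall b h,
  [set x | vle x b /\ (h%:E <= sigma x)%E] `<=` rect (ybh sigma b h) b.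
Proof.
move=> hdec b h; rewrite /ybh; set S := [set x | vle x b /\ _].
set P := (X in xget _ X).
suff [y Py] : exists y, P y by have [[_]] := xgetPex b (ex_intro _ y Py).
have [[x0 Sx0]|nS] := pselect (S !=set0); last first.
  exists b; split=> [|y' []//]; split => // x Sx.
  by exfalso; apply: nS; exists x.
have [M hM] := superlevel_supnorm_bounded hdec b h.
pose E i := [set x i | x in S].
have lbE i : lbound (E i) (- M).
  move=> _ [x [xb hx] <-]; rewrite lerNl ltW // (le_lt_trans _ (hM x xb hx)) //.
  apply: le_trans (le_bigmax _ (fun i => `|x i|) i).
  by rewrite -normrN ler_norm.
have inf_le i x : S x -> inf (E i) <= x i.
  by move=> Sx; apply: (ge_inf (ex_intro _ _ (lbE i))); exists x.
exists (fun i => inf (E i)); split.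
  split; first by move=> i; apply: le_trans (inf_le i x0 Sx0) (Sx0.1 i).
  by move=> x Sx; split=> [i|]; [exact: inf_le | exact: Sx.1].
move=> y' [_ hy'] i; apply: lb_le_inf; first by exists (x0 i), x0.
by move=> _ [x Sx <-]; have [] := hy' x Sx.
Qed.

Lemma S_set_sub_rect (q : R) (h : int) : sigma_decay sigma ->
  (forall w, fin_vals (cube q) sigma w -> h < w) ->
  S_set (cube q) sigma `<=` rect (ybh sigma (cst q) h) (cst q).
Proof.
move=> hdec hlt z [x Kx]; rewrite /S_pt; case hx: (sigma x) => [v||] // [zx sz].
apply: ybh_spec => //; split; first by move=> i; apply: le_trans (zx i) (Kx.2 i).
by rewrite sz lee_fin ltW // hlt //; exists x.
Qed.

Lemma S_set_eq_set0 (q : R) :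
  fin_vals (cube q) sigma = set0 -> S_set (cube q) sigma = set0.
Proof.
move=> empty; apply/seteqP; split=> // z [x Kx]; rewrite /S_pt.
case hx: (sigma x) => [v||] // _.
have : fin_vals (cube q) sigma v by exists x.
by rewrite empty.
Qed.

Lemma vfact_ybh_ge0 (q : R) h : 0 <= vfact (fun i => q - ybh sigma (cst q) h i).
Proof. by apply: prodr_ge0 => i _; rewrite subr_ge0; exact: ybh_le. Qed.

Lemma lambda_ge0 (q : R) k : (0 <= lambda q sigma k)%E.
Proof.
apply: le_trans (ereal_sup_ubound _); last by exists (k - 2) => //=.
by rewrite lee_fin mulr_ge0 ?vfact_ybh_ge0 // invr_ge0 exprn_ge0 // opprB addrC subrK.
Qed.

Lemma box_vol_ybh_le_lambda (q : R) (h : int) :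
  ((box_vol (ybh sigma (cst q) h) (cst q))%:E
   <= (2 ^+ d.+1)%:E * lambda q sigma (h + 2))%E.
Proof.
have -> : box_vol (ybh sigma (cst q) h) (cst q)
          = 2 ^+ d.+1 * (vfact (fun i => q - ybh sigma (cst q) h i) / 2 ^+ d.+1).
  rewrite mulrCA mulfV ?mulr1 ?expf_neq0 //.
  by apply: eq_bigr => i _; apply/max_idPl; rewrite subr_ge0 ybh_le.
rewrite EFinM lee_wpmul2l ?lee_fin ?exprn_ge0 //.
by apply: ereal_sup_ubound; exists h; rewrite /= ?addrK // addrAC subrr add0r.
Qed.

Lemma lambda_I_K_le_psi (q : R) : fin_vals (cube q) sigma !=set0 ->
  I_K (cube q) sigma <= J_K (cube q) sigma ->
  (lambda q sigma (I_K (cube q) sigma + 1) <= psi q sigma)%E.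
Proof.
move=> /set0P/eqP ne IJ; rewrite /psi asboolF // int_range_cons ?lerD2r //.
rewrite big_cons esqrt_sqrD_ge ?lambda_ge0 //.
by apply: sume_ge0 => k _; rewrite mule_ge0 ?lambda_ge0.
Qed.

End Sigma.

Theorem lemma7p2 (R : realType) (d : nat) (hd : (2 <= d)%N) (q : R) (hq : 0 < q)
  (sigma : ('I_d -> R) -> \bar int) (hsigma : inSigma sigma) :
  (leb_outer (S_set (cube q) sigma) <= (2 ^+ d.+1)%:E * psi q sigma)%E.
Proof.
have d0 : (0 < d)%N by apply: leq_trans hd.
case: hsigma => _ hpc hdec.
have [empty|/eqP/set0P ne] := pselect (fin_vals (cube q) sigma = set0).
  by rewrite S_set_eq_set0 // /psi asboolT // mule0 leb_outer_set0.
have [IK IK_min] := I_K_spec hq hpc ne.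
have [_ JK_max] := J_K_spec hq hpc ne.
set I := I_K (cube q) sigma in IK IK_min *.
have hsub : S_set (cube q) sigma `<=` rect (ybh sigma (cst q) (I - 1)) (cst q).
  apply: S_set_sub_rect hdec _ => w /IK_min Iw.
  by rewrite ltrBlDr (le_lt_trans Iw) // ltrDl.
apply: le_trans (leb_outer_le_box_vol d0 hsub) _.
apply: le_trans (box_vol_ybh_le_lambda _ _ _) _.
rewrite -addrA (_ : -1 + 2 = 1) //; apply: lee_wpmul2l; first by rewrite lee_fin exprn_ge0.
exact: lambda_I_K_le_psi ne (JK_max _ IK).
Qed.
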